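(* Let $A$ be a $\boldsymbol{\mathit{ba}\ell}$-algebra, $X={\sf Arch}(A)\setminus\{A\}$, $0\le a\in A$, $I\in X$, and $\alpha:A\to D(\mathbb R[B])$ as in the context. (1) If $s_I=\sup\{r\in\mathbb R\mid (a-r)^-\in I\}$, then $(a-s_I)^-\in I$. (2) For $r\in\mathbb R$: $rx_{\lnot I}\le\alpha(a)$ if and only if $(a-r)^-\in I$. (3) $s_I=\sup\{r\in\mathbb R\mid rx_{\lnot I}\le\alpha(a)\}$, and $I\vee[\![(a-s_I)^+]\!]\ne A$.
   Context: A $\boldsymbol{\mathit{ba}\ell}$-algebra is a commutative unital lattice-ordered algebra $A$ over $\mathbb R$ that is bounded (for every $a\in A$ there is an integer $n\ge1$ with $a\le n\cdot1$) and archimedean (if $na\le b$ for all $n\ge1$ then $a\le0$); reals $r$ are identified with $r\cdot1$. $a^+=a\vee0$, $a^-=(-a)\vee0$. An $\ell$-ideal is a ring ideal $I$ with $|a|\le|b|$, $b\in I\Rightarrow a\in I$; it is archimedean if $A/I$ is archimedean. ${\sf Arch}(A)$ is the set of archimedean $\ell$-ideals ordered by inclusion, a frame with meet $\cap$ and join $I\vee J$ the least archimedean $\ell$-ideal containing $I\cup J$; $[\![S]\!]$ is the intersection of all archimedean $\ell$-ideals containing $S\subseteq A$. $B$ is the free boolean extension of the bounded distributive lattice ${\sf Arch}(A)$; ${\sf Arch}(A)\subseteq B$ and $\lnot$ is complement in $B$. $\mathbb R[B]$ is the quotient of $\mathbb R[x_e\mid e\in B]$ by the ideal generated by $x_{e\wedge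 f}-x_ex_f$, $x_{e\vee f}-(x_e+x_f-x_ex_f)$, $x_{\lnot e}-(1-x_e)$, $x_0$; $D(\mathbb R[B])$ is its Dedekind completion (Dedekind complete $\boldsymbol{\mathit{ba}\ell}$-algebra containing $\mathbb R[B]$, every element a join of elements of $\mathbb R[B]$). $\alpha(a)=-s+\bigvee\{rx_{\lnot I}\mid r\in\mathbb R,\ I\in{\sf Arch}(A),\ (a+s-r)^-\in I\}$ for any $s\in\mathbb R$ with $a+s\ge0$ (well defined, independent of $s$). *)

From HB Require Import structures.
From mathcomp Require Import all_boot all_order all_algebra.
From mathcomp Require Import classical_sets reals.
From Stdlib Require Import ClassicalEpsilon.
Set Implicit Arguments. Unset Strict Implicit. Unset Printing Implicit Defensive.
Import Order.TTheory GRing.Theory Num.Theory.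
Local Open Scope ring_scope.

Section BalDefs.
Variable R : realType.

Section LAlg.
Variables (A : comAlgType R) (le : A -> A -> Prop) (join : A -> A -> A).

Definition pos (a : A) : A := join a 0.
Definition neg (a : A) : A := join (- a) 0.
Definition absv (a : A) : A := join a (- a).

Record is_bal : Prop := {
  bal_refl : forall a, le a a;
  bal_trans : forall a b c, le a b -> le b c -> le a c;
  bal_anti : forall a b, le a b -> le b a -> a = b;
  bal_join_lub : forall a b c, le (join a b) c <-> (le a c /\ le b c);
  bal_add : forall a b c, le a b -> le (a + c) (b + c);
  bal_mul : forall a b, le 0 a -> le 0 b -> le 0 (a * b);
  bal_scale : forall (r : R) a, 0 <= r -> le 0 a -> le 0 (r *: a);
  bal_bounded : forall a, exists n : nat, le a (n.+1)%:R;
  bal_archimedean : forall a b, (forall n : nat, le (a *+ n.+1) b) -> le a 0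
}.

Definition l_ideal (I : A -> Prop) : Prop :=
  [/\ I 0,
      (forall a b, I a -> I b -> I (a - b)),
      (forall a b, I b -> I (a * b)) &
      (forall a b, le (absv a) (absv b) -> I b -> I a)].

(* archimedean l-ideal: A/I is archimedean.  In A/I one has
   [a] <= [b]  iff  (a - b)^+ \in I, so this unfolds to: *)
Definition arch_ideal (I : A -> Prop) : Prop :=
  l_ideal I /\
  (forall a b, (forall n : nat, I (pos (a *+ n.+1 - b))) -> I (pos a)).

Definition arch_gen (S : A -> Prop) : A -> Prop :=
  fun a => forall J, arch_ideal J -> (forall b, S b -> J b) -> J a.

Definition arch_join (I J : A -> Prop) : A -> Prop :=
  arch_gen (fun a => I a \/ J a).

Definition arch_meet (I J : A -> Prop) : A -> Prop := fun a => I a /\ J a.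

Definition arch_bot : A -> Prop := arch_gen (fun _ => False).
Definition arch_top : A -> Prop := fun _ => True.

Definition is_lub (S : A -> Prop) (d : A) : Prop :=
  (forall y, S y -> le y d) /\ (forall u, (forall y, S y -> le y u) -> le d u).

End LAlg.

(* B : the free boolean extension of the bounded distributive lattice *)
(* Arch(A): a boolean algebra in which Arch(A) embeds as a bounded    *)
(* sublattice (via e) and which is generated by the image of e.       *)
Record free_bool_ext (A : comAlgType R) (le : A -> A -> Prop) (join : A -> A -> A)
    (disp : Order.disp_t) (B : ctbDistrLatticeType disp)
    (e : (A -> Prop) -> B) : Prop := {
  fbe_meet : forall I J, arch_ideal le join I -> arch_ideal le join J ->
     e (arch_meet I J) = Order.meet (e I) (e J);
  fbe_join : forall I J, arch_ideal le join I -> arch_ideal le join J ->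
     e (arch_join le join I J) = Order.join (e I) (e J);
  fbe_bot : e (arch_bot le join) = Order.bottom;
  fbe_top : e (@arch_top A) = Order.top;
  fbe_inj : forall I J, arch_ideal le join I -> arch_ideal le join J ->
     e I = e J -> I = J;
  fbe_gen : forall P : B -> Prop,
     (forall I, arch_ideal le join I -> P (e I)) ->
     (forall b c, P b -> P c -> P (Order.meet b c)) ->
     (forall b c, P b -> P c -> P (Order.join b c)) ->
     (forall b, P b -> P (Order.compl b)) ->
     forall b, P b
}.

(* R[B] inside D, and D = D(R[B]) its Dedekind completion.            *)
(* x : B -> D sends e to (the image of) the generator x_e.            *)
Section Completion.
Variables (disp : Order.disp_t) (B : ctbDistrLatticeType disp).
Variables (D : comAlgType R) (leD : D -> D -> Prop) (joinD : D -> D -> D).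
Variable x : B -> D.

Definition in_RB (y : D) : Prop :=
  exists n (r : 'I_n -> R) (f : 'I_n -> B), y = \sum_(i < n) r i *: x (f i).

Record dedekind_completion_RB : Prop := {
  dc_bal : is_bal leD joinD;
  dc_meet : forall f g, x (Order.meet f g) = x f * x g;
  dc_join : forall f g, x (Order.join f g) = x f + x g - x f * x g;
  dc_compl : forall f, x (Order.compl f) = 1 - x f;
  dc_bot : x Order.bottom = 0;
  (* the induced algebra map R[B] -> D is injective *)
  dc_inj : forall f, x f = 0 -> f = Order.bottom;
  dc_complete : forall S : D -> Prop, (exists y, S y) ->
     (exists u, forall y, S y -> leD y u) -> exists d, is_lub leD S d;
  dc_dense : forall d, exists S : D -> Prop,
     (forall y, S y -> in_RB y) /\ is_lub leD S d
}.

End Completion.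

Section Alpha.
Variables (A : comAlgType R) (leA : A -> A -> Prop) (joinA : A -> A -> A).
Variables (disp : Order.disp_t) (B : ctbDistrLatticeType disp).
Variable e : (A -> Prop) -> B.
Variables (D : comAlgType R) (leD : D -> D -> Prop) (joinD : D -> D -> D).
Variable x : B -> D.

Definition alpha_set (s : R) (a : A) : D -> Prop :=
  fun y => exists (r : R) (I : A -> Prop), arch_ideal leA joinA I /\
     I (neg joinA (a + s%:A - r%:A)) /\ y = r *: x (Order.compl (e I)).

(* the join in D (chosen by the lub property; unique by antisymmetry) *)
Definition supD (S : D -> Prop) : D :=
  epsilon (inhabits (0 : D)) (fun d => is_lub leD S d).

Definition alpha_shift (a : A) : R :=
  epsilon (inhabits (0 : R)) (fun s : R => leA 0 (a + s%:A)).

Definition alpha (a : A) : D :=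
  - (alpha_shift a)%:A + supD (alpha_set (alpha_shift a) a).

End Alpha.

End BalDefs.

(* Part (1) holds because I is
   archimedean.  For the rest we introduce the ideal J of the elements that
   "vanish where a <= s_I": J is an archimedean l-ideal containing I and every
   (a - c)^+ with c >= s_I, but not 1, so I \/ [[(a - c)^+]] <> A for c >= s_I.
   On the side of D(R[B]) the x_f are idempotents.  Writing
   alpha(a) = -s + sup S, the direction "<-" of (2) is a mixing argument with
   the complementary idempotents x_{~I} and x_I.  For "->", if r > s_I pick
   s_I < c < r and K = [[(a - c)^+]]: S is bounded by (c + s) x_{~K} + M x_K,
   which forces x_{~I} x_{~K} = 0, i.e. I \/ K = A, a contradiction. *)

From Pilot Require Import Defs.
From HB Require Import structures.
From mathcomp Require Import all_boot all_order all_algebra.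
From mathcomp Require Import boolp classical_sets reals.
From mathcomp Require Import ring lra.
From Stdlib Require Import ClassicalEpsilon.
Import Order.Theory GRing.Theory Num.Theory.
Local Open Scope ring_scope.
Set Implicit Arguments. Unset Strict Implicit.

Section BalAlgebra.
Variables (R : realType) (T : comAlgType R) (le : T -> T -> Prop) (join : T -> T -> T).
Hypothesis H : is_bal le join.
Local Notation "x <=: y" := (le x y) (at level 70).
Local Notation pos := (pos join).
Local Notation neg := (neg join).
Local Notation absv := (absv join).

Lemma ble_refl a : a <=: a. Proof. exact: (bal_refl H a). Qed.
Lemma ble_trans a b c : a <=: b -> b <=: c -> a <=: c.
Proof. exact: (bal_trans H). Qed.
Lemma ble_anti a b : a <=: b -> b <=: a -> a = b. Proof. exact: (bal_anti H). Qed.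
Lemma join_l a b : a <=: join a b.
Proof. by have /(bal_join_lub H) [] := ble_refl (join a b). Qed.
Lemma join_r a b : b <=: join a b.
Proof. by have /(bal_join_lub H) [] := ble_refl (join a b). Qed.
Lemma join_lub a b c : a <=: c -> b <=: c -> join a b <=: c.
Proof. by move=> h1 h2; apply/(bal_join_lub H). Qed.
Lemma join_C a b : join a b = join b a.
Proof. by apply: ble_anti; apply: join_lub; first [exact: join_l | exact: join_r]. Qed.
Lemma join_mono a b c d : a <=: b -> c <=: d -> join a c <=: join b d.
Proof.
move=> h1 h2; apply: join_lub; first by apply: ble_trans h1 _; exact: join_l.
by apply: ble_trans h2 _; exact: join_r.
Qed.

Lemma le_add2r a b c : a <=: b -> a + c <=: b + c. Proof. exact: (bal_add H). Qed.
Lemma le_add a b c d : a <=: b -> c <=: d -> a + c <=: b + d.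
Proof.
move=> h1 h2; apply: ble_trans (le_add2r c h1) _.
by rewrite ![b + _]addrC; apply: le_add2r.
Qed.
Lemma le_subP a b : a <=: b <-> 0 <=: b - a.
Proof.
split=> h; first by have := le_add2r (- a) h; rewrite subrr.
by have := le_add2r a h; rewrite add0r subrK.
Qed.
Lemma le_opp a b : a <=: b -> - b <=: - a.
Proof. by move=> /le_subP h; apply/le_subP; rewrite opprK addrC. Qed.
Lemma le_opp_eq a b : - b <=: - a -> a <=: b.
Proof. by move=> /le_opp; rewrite !opprK. Qed.
Lemma le_addK a b c : a + c <=: b -> a <=: b - c.
Proof. by move=> h; have := le_add2r (- c) h; rewrite addrK. Qed.
Lemma le_subK a b c : a <=: b + c -> a - c <=: b.
Proof. by move=> h; have := le_add2r (- c) h; rewrite addrK. Qed.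
Lemma add_ge0 a b : 0 <=: a -> 0 <=: b -> 0 <=: a + b.
Proof. by move=> h1 h2; have := le_add h1 h2; rewrite addr0. Qed.
Lemma join_addr a b c : join a b + c = join (a + c) (b + c).
Proof.
apply: ble_anti; last first.
  by apply: join_lub; apply: le_add2r; first [exact: join_l | exact: join_r].
have h : join a b <=: join (a + c) (b + c) - c.
  by apply: join_lub; apply: le_addK; first [exact: join_l | exact: join_r].
by have := le_add2r c h; rewrite subrK.
Qed.

Definition meet a b := - join (- a) (- b).
Lemma meet_l a b : meet a b <=: a.
Proof. by apply: le_opp_eq; rewrite opprK; exact: join_l. Qed.
Lemma meet_r a b : meet a b <=: b.
Proof. by apply: le_opp_eq; rewrite opprK; exact: join_r. Qed.
Lemma meet_glb a b c : c <=: a -> c <=: b -> c <=: meet a b.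
Proof.
move=> h1 h2; apply: le_opp_eq; rewrite /meet opprK.
by apply: join_lub; apply: le_opp.
Qed.
Lemma meet_C a b : meet a b = meet b a.
Proof. by rewrite /meet join_C. Qed.
Lemma meet_addr a b c : meet a b + c = meet (a + c) (b + c).
Proof. by rewrite /meet -[LHS]opprK opprD opprK join_addr !opprD. Qed.
Lemma meet_id a : meet a a = a.
Proof. by apply: ble_anti; [exact: meet_l | apply: meet_glb; exact: ble_refl]. Qed.
Lemma meet_mono a b c d : a <=: b -> c <=: d -> meet a c <=: meet b d.
Proof.
move=> h1 h2; apply: meet_glb; first by apply: ble_trans h1; exact: meet_l.
by apply: ble_trans h2; exact: meet_r.
Qed.
Lemma meet_ge0 a b : 0 <=: a -> 0 <=: b -> 0 <=: meet a b.
Proof. exact: meet_glb. Qed.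

Lemma scale_ge0 (k : R) a : 0 <= k -> 0 <=: a -> 0 <=: k *: a.
Proof. exact: (bal_scale H). Qed.
Lemma mul_ge0 a b : 0 <=: a -> 0 <=: b -> 0 <=: a * b.
Proof. exact: (bal_mul H). Qed.
Lemma le_scale (k : R) a b : 0 <= k -> a <=: b -> k *: a <=: k *: b.
Proof. by move=> hk /le_subP h; apply/le_subP; rewrite -scalerBr; exact: scale_ge0. Qed.
Lemma le_mulr p a b : 0 <=: p -> a <=: b -> a * p <=: b * p.
Proof. by move=> hp /le_subP h; apply/le_subP; rewrite -mulrBl; exact: mul_ge0. Qed.
Lemma scale_le_l (k l : R) v : k <= l -> 0 <=: v -> k *: v <=: l *: v.
Proof.
move=> hkl hv; apply/le_subP; rewrite -scalerBl; apply: scale_ge0 hv.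
by rewrite subr_ge0.
Qed.
Lemma le_scale_ge1 (k : R) u : 1 <= k -> 0 <=: u -> u <=: k *: u.
Proof. by move=> hk hu; have := scale_le_l hk hu; rewrite scale1r. Qed.
Lemma le_scale_le1 (k : R) u : k <= 1 -> 0 <=: u -> k *: u <=: u.
Proof. by move=> hk hu; have := scale_le_l hk hu; rewrite scale1r. Qed.

Lemma pos_ge0 a : 0 <=: pos a. Proof. exact: join_r. Qed.
Lemma le_pos a : a <=: pos a. Proof. exact: join_l. Qed.
Lemma neg_ge0 a : 0 <=: neg a. Proof. exact: join_r. Qed.
Lemma le_neg a : - a <=: neg a. Proof. exact: join_l. Qed.
Lemma pos_lub a b : a <=: b -> 0 <=: b -> pos a <=: b. Proof. exact: join_lub. Qed.
Lemma neg_pos a : neg a = pos a - a.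
Proof. by rewrite /Defs.neg /Defs.pos join_addr subrr add0r join_C. Qed.
Lemma pos_sub_neg a : pos a - neg a = a.
Proof. by rewrite neg_pos opprB addrC subrK. Qed.
Lemma neg_le a b : a <=: b -> neg b <=: neg a.
Proof. by move=> h; apply: join_mono (le_opp h) (ble_refl 0). Qed.
Lemma pos_id a : 0 <=: a -> pos a = a.
Proof. by move=> h; apply: ble_anti; [exact: pos_lub (ble_refl a) h | exact: le_pos]. Qed.
Lemma neg_id0 a : 0 <=: a -> neg a = 0.
Proof. by move=> h; rewrite neg_pos pos_id // subrr. Qed.
Lemma pos_subC (u : T) (k : R) : pos u - k%:A = join (u - k%:A) (- k%:A).
Proof. by rewrite /Defs.pos join_addr add0r. Qed.
Lemma meet_pos_neg a : meet (pos a) (neg a) = 0.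
Proof.
rewrite neg_pos.
have -> : meet (pos a) (pos a - a) = meet 0 (- a) + pos a.
  by rewrite meet_addr add0r addrC.
by rewrite /meet opprK oppr0 join_C addrC subrr.
Qed.

Lemma le_abs a : a <=: absv a. Proof. exact: join_l. Qed.
Lemma le_absN a : - a <=: absv a. Proof. exact: join_r. Qed.
Lemma abs_lub a b : a <=: b -> - a <=: b -> absv a <=: b. Proof. exact: join_lub. Qed.
Lemma half_ge0 a : 0 <=: a + a -> 0 <=: a.
Proof.
move=> h; have := scale_ge0 (k := 2^-1) (ltW _) h.
have e : (2^-1 + 2^-1 : R) = 1 by field.
by rewrite scalerDr -scalerDl e scale1r; apply; rewrite invr_gt0.
Qed.
Lemma abs_ge0 a : 0 <=: absv a.
Proof. by apply: half_ge0; have := le_add (le_abs a) (le_absN a); rewrite subrr. Qed.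
Lemma abs_id a : 0 <=: a -> absv a = a.
Proof.
move=> h; apply: ble_anti; last exact: le_abs.
by apply: abs_lub (ble_refl a) _; apply: ble_trans (le_opp h) _; rewrite oppr0.
Qed.
Lemma abs_opp a : absv (- a) = absv a.
Proof. by rewrite /Defs.absv opprK join_C. Qed.
Lemma abs_tri a b : absv (a + b) <=: absv a + absv b.
Proof.
apply: abs_lub; first exact: le_add (le_abs a) (le_abs b).
by rewrite opprD; exact: le_add (le_absN a) (le_absN b).
Qed.
Lemma abs_abs a : absv (absv a) = absv a.
Proof. exact: abs_id (abs_ge0 a). Qed.

Lemma bounded a : exists N : R, 1 <= N /\ a <=: N%:A.
Proof.
have [n hn] := bal_bounded H a; exists (n.+1)%:R.
by rewrite ler1n scaler_nat.
Qed.

Lemma meet_scale_le (N : R) u v : 1 <= N -> 0 <=: v ->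
  meet (N *: u) v <=: N *: meet u v.
Proof.
move=> hN hv.
have N0 : 0 < N by apply: lt_le_trans hN.
have Ni0 : 0 <= N^-1 by rewrite invr_ge0 ltW.
have -> : meet (N *: u) v = N *: (N^-1 *: meet (N *: u) v).
  by rewrite scalerA divff ?scale1r // gt_eqF.
apply: le_scale; first exact: ltW.
apply: meet_glb.
  have := le_scale Ni0 (meet_l (N *: u) v).
  by rewrite scalerA mulVf ?scale1r ?gt_eqF.
apply: ble_trans (le_scale Ni0 (meet_r (N *: u) v)) _.
by apply: le_scale_le1 hv; rewrite invr_le1 // unitfE gt_eqF.
Qed.

Lemma meet_scale2 (k : R) u v : 0 < k -> meet (k *: u) (k *: v) <=: k *: meet u v.
Proof.
move=> hk.
have hk' : 0 <= k^-1 by rewrite invr_ge0 ltW.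
have -> : meet (k *: u) (k *: v) = k *: (k^-1 *: meet (k *: u) (k *: v)).
  by rewrite scalerA divff ?scale1r // gt_eqF.
apply: le_scale; first exact: ltW.
apply: meet_glb.
  have := le_scale hk' (meet_l (k *: u) (k *: v)).
  by rewrite scalerA mulVf ?scale1r ?gt_eqF.
have := le_scale hk' (meet_r (k *: u) (k *: v)).
by rewrite scalerA mulVf ?scale1r ?gt_eqF.
Qed.

Lemma meet_add_le p q y : 0 <=: p -> 0 <=: q -> 0 <=: y ->
  meet (p + q) y <=: meet p y + meet q y.
Proof.
move=> hp hq hy; set m := meet (p + q) y.
suff h : m - meet p y <=: meet q y.
  by have := le_add2r (meet p y) h; rewrite subrK addrC.
apply: meet_glb.
  apply: le_subK; rewrite addrC meet_addr.
  apply: meet_glb; first exact: meet_l.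
  apply: ble_trans (meet_r (p + q) y) _.
  by have := le_add (ble_refl y) hq; rewrite addr0.
apply: le_subK; apply: ble_trans (meet_r (p + q) y) _.
by have := le_add (ble_refl y) (meet_ge0 hp hy); rewrite addr0.
Qed.

(* The f-ring property: disjointness u /\ v = 0 survives multiplication of u by a
   positive element (this uses boundedness). *)
Lemma meet_mul_disjoint u v c : meet u v = 0 -> 0 <=: c -> meet (c * u) v = 0.
Proof.
move=> huv hc.
have hu : 0 <=: u by rewrite -huv; exact: meet_l.
have hv : 0 <=: v by rewrite -huv; exact: meet_r.
have [N [hN hcN]] := bounded c.
apply: ble_anti; last exact: meet_ge0 (mul_ge0 hc hu) hv.
apply: ble_trans (meet_mono (le_mulr hu hcN) (ble_refl v)) _.
rewrite mulr_algl; apply: ble_trans (meet_scale_le u hN hv) _.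
by rewrite huv scaler0; exact: ble_refl.
Qed.

(* a^+ a^- = 0, by applying the f-ring property twice to a^+ /\ a^- = 0. *)
Lemma pos_neg_mul a : pos a * neg a = 0.
Proof.
have h1 := meet_pos_neg a.
have h2 : meet (neg a * pos a) (neg a) = 0 by apply: meet_mul_disjoint h1 (neg_ge0 a).
rewrite meet_C in h2.
have h3 : meet (pos a * neg a) (neg a * pos a) = 0.
  by apply: meet_mul_disjoint h2 (pos_ge0 a).
by rewrite [neg a * _]mulrC meet_id in h3.
Qed.

(* Squares are positive: a^2 = (a^+)^2 + (a^-)^2 since a^+ a^- = 0. *)
Lemma sqr_ge0 a : 0 <=: a * a.
Proof.
have -> : a * a = pos a * pos a + neg a * neg a - (pos a * neg a) *+ 2.
  by rewrite -{1 2}(pos_sub_neg a); ring.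
rewrite pos_neg_mul mul0rn subr0.
by apply: add_ge0; apply: mul_ge0; first [exact: pos_ge0 | exact: neg_ge0].
Qed.
Lemma ge0_1 : 0 <=: 1.
Proof. by have := sqr_ge0 1; rewrite mulr1. Qed.
Lemma alg_ge0 (k : R) : 0 <= k -> 0 <=: k%:A.
Proof. by move=> h; apply: scale_ge0 h ge0_1. Qed.
Lemma alg_le (k l : R) : k <= l -> k%:A <=: l%:A.
Proof. by move=> h; apply/le_subP; rewrite -scalerBl; apply: alg_ge0; rewrite subr_ge0. Qed.

Lemma le_mix p y1 y2 d : 0 <=: p -> 0 <=: 1 - p -> y1 <=: d -> y2 <=: d ->
  y1 * p + y2 * (1 - p) <=: d.
Proof.
move=> hp hq h1 h2.
have -> : d = d * p + d * (1 - p) by rewrite mulrBr mulr1 addrC subrK.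
exact: le_add (le_mulr hp h1) (le_mulr hq h2).
Qed.

(* Two positive idempotents p, w with r p + s <= (c + s) w + M (1 - w) and c < r
   are disjoint: multiplying by p w gives (r + s) p w <= (c + s) p w. *)
Lemma idem_disjoint p w (r s c M : R) : p * p = p -> w * w = w ->
  0 <=: p -> 0 <=: w -> c < r ->
  r *: p + s%:A <=: (c + s) *: w + M *: (1 - w) -> p * w = 0.
Proof.
move=> pp ww p0 w0 hcr h.
have z0 : 0 <=: p * w by exact: mul_ge0.
have hz := le_mulr z0 h.
have l1 : (r *: p + s%:A) * (p * w) = (r + s) *: (p * w).
  by rewrite mulrDl -scalerAl mulrA pp mulr_algl scalerDl.
have l2 : ((c + s) *: w + M *: (1 - w)) * (p * w) = (c + s) *: (p * w).
  by rewrite mulrDl -!scalerAl mulrBl mul1r mulrCA ww subrr scaler0 addr0.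
rewrite l1 l2 in hz.
have rc0 : 0 <= (r - c)^-1 by rewrite invr_ge0 subr_ge0 ltW.
have hz2 : (r - c) *: (p * w) <=: 0.
  apply/le_subP; rewrite sub0r -scaleNr.
  have -> : - (r - c) = (c + s) - (r + s) by lra.
  by rewrite scalerBl; apply: (le_subP _ _).1.
apply: ble_anti z0.
by have := le_scale rc0 hz2; rewrite scalerA mulVf ?scale1r ?scaler0 // subr_eq0 gt_eqF.
Qed.

Lemma abs_mul_le (zp zn bp bn : T) : 0 <=: zp -> 0 <=: zn -> 0 <=: bp -> 0 <=: bn ->
  absv ((zp - zn) * (bp - bn)) <=: (zp + zn) * (bp + bn).
Proof.
move=> h1 h2 h3 h4; apply: abs_lub; apply/le_subP.
  have -> : (zp + zn) * (bp + bn) - (zp - zn) * (bp - bn) = (zp * bn + zn * bp) *+ 2.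
    by ring.
  by rewrite mulr2n; apply: add_ge0; apply: add_ge0; apply: mul_ge0.
have -> : (zp + zn) * (bp + bn) - - ((zp - zn) * (bp - bn)) = (zp * bp + zn * bn) *+ 2.
  by ring.
by rewrite mulr2n; apply: add_ge0; apply: add_ge0; apply: mul_ge0.
Qed.

Section ArchIdeal.
Variable I : T -> Prop.
Hypothesis hI : arch_ideal le join I.

Lemma I0 : I 0. Proof. by case: hI => -[]. Qed.
Lemma I_sub a b : I a -> I b -> I (a - b). Proof. by case: hI => -[_ h _ _] _; apply: h. Qed.
Lemma I_mul a b : I b -> I (a * b). Proof. by case: hI => -[_ _ h _] _; apply: h. Qed.
Lemma I_solid a b : absv a <=: absv b -> I b -> I a.
Proof. by case: hI => -[_ _ _ h] _; apply: h. Qed.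
Lemma I_arch a b : (forall n : nat, I (pos (a *+ n.+1 - b))) -> I (pos a).
Proof. by case: hI => _ h; apply: h. Qed.
Lemma I_add a b : I a -> I b -> I (a + b).
Proof.
move=> h1 h2; rewrite -[b]opprK; apply: I_sub h1 _.
by rewrite -sub0r; apply: I_sub I0 h2.
Qed.
Lemma I_scale (k : R) b : I b -> I (k *: b).
Proof. by move=> h; rewrite -mulr_algl; apply: I_mul. Qed.
Lemma I_le u v : 0 <=: u -> u <=: v -> I v -> I u.
Proof. by move=> h0 h1; apply: I_solid; rewrite !abs_id //; apply: ble_trans h0 h1. Qed.
Lemma I_abs b : I b -> I (absv b).
Proof. by apply: I_solid; rewrite abs_abs; exact: ble_refl. Qed.

Lemma ideal_full_of_const (k : R) w : 0 < k -> k%:A <=: w -> I w -> forall b, I b.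
Proof.
move=> hk hw Iw b.
have I1 : I 1.
  apply: (I_le ge0_1 _ (I_scale k^-1 Iw)).
  have := le_scale (k := k^-1) (ltW _) hw.
  by rewrite scalerA mulVf ?gt_eqF // scale1r; apply; rewrite invr_gt0.
by rewrite -[b]mulr1; apply: I_mul.
Qed.
End ArchIdeal.

Lemma arch_gen_ideal S : arch_ideal le join (arch_gen le join S).
Proof.
split; first split.
- by move=> J hJ _; exact: I0 hJ.
- by move=> a b ha hb J hJ hS; exact: (I_sub hJ (ha J hJ hS) (hb J hJ hS)).
- by move=> a b hb J hJ hS; apply: (I_mul hJ); exact: (hb J hJ hS).
- by move=> a b hab hb J hJ hS; exact: (I_solid hJ hab (hb J hJ hS)).
- by move=> a b hn J hJ hS; apply: (I_arch hJ (b := b)) => n; exact: hn.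
Qed.
Lemma arch_gen_in (S : T -> Prop) b : S b -> arch_gen le join S b.
Proof. by move=> h J _ hS; apply: hS. Qed.
Lemma arch_gen_sub (S J : T -> Prop) : arch_ideal le join J ->
  (forall b, S b -> J b) -> forall b, arch_gen le join S b -> J b.
Proof. by move=> hJ hS b hb; apply: hb. Qed.

Lemma arch_top_ideal : arch_ideal le join (arch_top (A := T)).
Proof. by split; first split. Qed.

Lemma arch_join_full (L K : T -> Prop) w1 w2 (k : R) : 0 < k -> k%:A <=: w1 + w2 ->
  L w1 -> K w2 -> arch_join le join L K = arch_top (A := T).
Proof.
move=> hk hw Lw Kw; apply: funext => b.
apply: propext; split => // _ J hJ hLK.
apply: (ideal_full_of_const hJ hk hw).
by apply: (I_add hJ); apply: hLK; [left | right].
Qed.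

Section Cut.
Variable a : T.
Hypothesis ha : 0 <=: a.
Variable I : T -> Prop.
Hypothesis hI : arch_ideal le join I.
Hypothesis hIA : I <> arch_top (A := T).

Definition cut : set R := [set r : R | I (neg (a - r%:A))].
Definition cut_sup : R := sup cut.

Lemma ideal_proper : ~ (forall b, I b).
Proof.
move=> h; apply: hIA; apply: funext => b.
by apply: propext; split.
Qed.

Lemma alg_sub_le (r r' : R) : r' <= r -> a - r%:A <=: a - r'%:A.
Proof. by move=> h; apply: le_add (ble_refl a) (le_opp (alg_le h)). Qed.

Lemma cut_down r r' : r' <= r -> cut r -> cut r'.
Proof. by move=> h; apply: (I_le hI (neg_ge0 _) (neg_le (alg_sub_le h))). Qed.

(* 0 is in the cut; if a <= N, no r > N is, since r - N <= (a - r)^- would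
   force I = A. *)
Lemma cut_has_sup : has_sup cut.
Proof.
split; first by exists 0; rewrite /cut /= scale0r subr0 neg_id0 //; exact: I0 hI.
have [N [_ hN]] := bounded a; exists N => r hr.
rewrite leNgt; apply/negP => hrN; apply: ideal_proper.
apply: (ideal_full_of_const hI (k := r - N) (w := neg (a - r%:A))) hr.
  by rewrite subr_gt0.
apply: ble_trans _ (le_neg _); rewrite opprB scalerBl.
by apply: le_add (ble_refl _) (le_opp hN).
Qed.

Lemma cut_le_sup r : cut r -> r <= cut_sup.
Proof. exact: sup_upper_bound cut_has_sup r. Qed.

(* Since I is archimedean, n (a - s_I)^- - 1 <= n (a - (s_I - 1/n))^- \in I. *)
Lemma cut_sup_in : cut cut_sup.
Proof.
rewrite /cut /= -(pos_id (neg_ge0 (a - cut_sup%:A))).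
apply: (I_arch hI (b := 1)) => n.
set m : R := (n.+1)%:R.
have m0 : 0 < m by rewrite ltr0n.
have hm : cut (cut_sup - m^-1).
  have mi0 : 0 < m^-1 by rewrite invr_gt0.
  have [r hr hlt] := @sup_adherent _ cut m^-1 mi0 cut_has_sup.
  by apply: cut_down hr; exact: ltW.
apply: (I_le hI (pos_ge0 _) _ (I_scale hI m hm)).
apply: pos_lub; last by apply: scale_ge0 (ltW m0) (neg_ge0 _).
have h1 : neg (a - cut_sup%:A) <=: neg (a - (cut_sup - m^-1)%:A) + (m^-1)%:A.
  apply: join_lub.
    apply: ble_trans _ (le_add2r _ (le_neg _)).
    by rewrite !opprB scalerBl addrAC subrK; exact: ble_refl.
  by apply: add_ge0 (neg_ge0 _) (alg_ge0 _); rewrite invr_ge0 ltW.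
have := le_scale (ltW m0) h1.
rewrite scalerDr scalerA mulfV ?gt_eqF // scaler_nat scale1r => h2.
exact: le_subK.
Qed.

Lemma cut_iff r : cut r <-> r <= cut_sup.
Proof. by split; [exact: cut_le_sup | move=> h; apply: cut_down h cut_sup_in]. Qed.

Lemma cut_shift (s : R) : 0 <=: a + s%:A -> - s <= cut_sup.
Proof.
move=> h; apply/cut_iff; rewrite /cut /= scaleNr opprK neg_id0 //.
exact: I0 hI.
Qed.

(* The ideal J of the elements vanishing where a <= s_I: for every e > 0 some
   d > 0 makes (|b| - e)^+ disjoint from (a - (s_I + d))^- modulo I. *)
Definition gap (d : R) : T := neg (a - (cut_sup + d)%:A).
Definition Jcut (b : T) : Prop := forall e : R, 0 < e ->
  exists d : R, 0 < d /\ I (meet (pos (absv b - e%:A)) (gap d)).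

Lemma gap_mono d d' : d <= d' -> gap d <=: gap d'.
Proof. by move=> h; apply: neg_le; apply: alg_sub_le; rewrite lerD2l. Qed.

Lemma J_solidk (k : R) b b' : 1 <= k -> absv b' <=: k *: absv b -> Jcut b -> Jcut b'.
Proof.
move=> hk hb Jb e he.
have k0 : 0 < k by apply: lt_le_trans hk.
have [d [hd Id]] := Jb (e / k) (divr_gt0 he k0).
exists d; split => //.
apply: (I_le hI (meet_ge0 (pos_ge0 _) (neg_ge0 _)) _ (I_scale hI k Id)).
apply: ble_trans (meet_scale_le _ hk (neg_ge0 _)).
apply: meet_mono (ble_refl _).
apply: pos_lub; last by apply: scale_ge0 (ltW k0) (pos_ge0 _).
apply: ble_trans (le_scale (ltW k0) (le_pos _)).
rewrite scalerBr scalerA mulrC divfK ?gt_eqF //.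
exact: le_add2r hb.
Qed.

Lemma J_of_I b : I b -> Jcut b.
Proof.
move=> Ib e he; exists 1; split => //.
apply: (I_le hI (meet_ge0 (pos_ge0 _) (neg_ge0 _)) _ (I_abs hI Ib)).
apply: ble_trans (meet_l _ _) _.
apply: pos_lub (abs_ge0 _).
by have := le_add (ble_refl (absv b)) (le_opp (alg_ge0 (ltW he))); rewrite oppr0 addr0.
Qed.

(* J is closed under differences: the two witnesses d1, d2 combine into min d1 d2. *)
Lemma J_sub b1 b2 : Jcut b1 -> Jcut b2 -> Jcut (b1 - b2).
Proof.
move=> J1 J2 e he.
have he2 : 0 < e / 2 by rewrite divr_gt0.
have [d1 [hd1 I1]] := J1 _ he2.
have [d2 [hd2 I2]] := J2 _ he2.
exists (Order.min d1 d2); split; first by rewrite lt_min hd1.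
set p1 := pos (absv b1 - (e / 2)%:A).
set p2 := pos (absv b2 - (e / 2)%:A).
set y := gap (Order.min d1 d2).
apply: (I_le hI (meet_ge0 (pos_ge0 _) (neg_ge0 _)) _ (I_add hI I1 I2)).
have hp : pos (absv (b1 - b2) - e%:A) <=: p1 + p2.
  apply: pos_lub; last by apply: add_ge0; exact: pos_ge0.
  apply: ble_trans _ (le_add (le_pos _) (le_pos _)).
  have he' : e / 2 + e / 2 = e by lra.
  rewrite addrACA -opprD -scalerDl he'; apply: le_add2r.
  by have := abs_tri b1 (- b2); rewrite abs_opp.
apply: ble_trans (meet_mono hp (ble_refl y)) _.
apply: ble_trans (meet_add_le (pos_ge0 _) (pos_ge0 _) (neg_ge0 _)) _.
apply: le_add; apply: meet_mono (ble_refl _) (gap_mono _).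
  by rewrite ge_min lexx.
by rewrite ge_min lexx orbT.
Qed.

(* J is an ideal: |z b| <= 4 M |b| when |z| <= M. *)
Lemma J_mul z b : Jcut b -> Jcut (z * b).
Proof.
move=> Jb.
have [M [hM1 hM]] := bounded (absv z).
have M0 : 0 <= M by apply: le_trans hM1.
apply: (J_solidk (k := (M + M) + (M + M))) Jb; first by lra.
have hzb : absv (z * b) <=: (pos z + neg z) * (pos b + neg b).
  rewrite -{1}(pos_sub_neg z) -{1}(pos_sub_neg b).
  by apply: abs_mul_le; first [exact: pos_ge0 | exact: neg_ge0].
apply: ble_trans hzb _.
have hP : pos z + neg z <=: (M + M)%:A.
  rewrite scalerDl; apply: le_add.
    by apply: pos_lub (alg_ge0 M0); apply: ble_trans (le_abs z) hM.
  by apply: join_lub (alg_ge0 M0); apply: ble_trans (le_absN z) hM.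
have hQ0 : 0 <=: pos b + neg b by apply: add_ge0; [exact: pos_ge0 | exact: neg_ge0].
apply: ble_trans (le_mulr hQ0 hP) _.
rewrite mulr_algl.
have hQ : pos b + neg b <=: absv b + absv b.
  apply: le_add; first by apply: pos_lub (le_abs b) (abs_ge0 b).
  by apply: join_lub (le_absN b) (abs_ge0 b).
apply: ble_trans (le_scale _ hQ) _; first by lra.
by rewrite scalerDr -scalerDl; exact: ble_refl.
Qed.

(* J is archimedean: if (n u - v)^+ \in J for all n, then, choosing n with
   2 M < (n + 1) e where v <= M, the witness for (n u - v)^+ at (n + 1) e / 2
   also serves for u^+ at e. *)
Lemma J_arch u v : (forall n : nat, Jcut (pos (u *+ n.+1 - v))) -> Jcut (pos u).
Proof.
move=> hJ e he.
have [M [hM1 hM]] := bounded v.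
have M0 : 0 <= M by apply: le_trans hM1.
set n := Num.Def.archi_bound (2 * M / e).
have hn : 2 * M / e < n%:R.
  by apply: archi_boundP; apply: divr_ge0 (ltW he); lra.
set m : R := (n.+1)%:R.
have m0 : 0 < m by rewrite ltr0n.
have h2M : 2 * M < m * e.
  by rewrite -ltr_pdivrMr //; apply: lt_le_trans hn _; rewrite ler_nat.
have hMm : m^-1 * M <= e / 2.
  by rewrite -(ler_pM2l m0) mulrA mulfV ?gt_eqF // mul1r; lra.
set e' := m * e / 2.
have he' : 0 < e' by rewrite /e' !divr_gt0 ?mulr_gt0.
have [d [hd Id]] := hJ n e' he'.
exists d; split => //.
apply: (I_le hI (meet_ge0 (pos_ge0 _) (neg_ge0 _)) _ Id).
apply: meet_mono (ble_refl _).
set w := pos (u *+ n.+1 - v).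
rewrite (abs_id (pos_ge0 u)) (abs_id (pos_ge0 (u *+ n.+1 - v))).
have hmi0 : 0 <= m^-1 by rewrite invr_ge0 ltW.
have hmi1 : m^-1 <= 1 by rewrite invr_le1 ?unitfE ?gt_eqF // ler1n.
apply: ble_trans (le_scale_le1 hmi1 (pos_ge0 (w - e'%:A))).
apply: pos_lub; last by apply: scale_ge0 hmi0 (pos_ge0 _).
rewrite pos_subC; apply: join_lub; last first.
  apply: ble_trans (le_opp (alg_ge0 (ltW he))) _; rewrite oppr0.
  by apply: scale_ge0 hmi0 (pos_ge0 _).
apply: ble_trans (le_scale hmi0 (le_pos (w - e'%:A))).
apply: ble_trans (le_scale hmi0 (le_add2r (- e'%:A) (le_pos (u *+ n.+1 - v)))).
rewrite -scaler_nat !scalerBr scalerA mulVf ?gt_eqF // scale1r scalerA.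
have -> : m^-1 * e' = e / 2.
  by rewrite /e' mulrA mulrA mulVf ?gt_eqF // mul1r.
have he2 : e%:A = (e / 2)%:A + (e / 2)%:A :> T.
  by rewrite -scalerDl; congr (_ *: _); lra.
rewrite he2 opprD addrA; apply: le_add2r; apply: le_add (ble_refl u) _.
apply: le_opp; apply: ble_trans (le_scale hmi0 hM) _.
by rewrite scalerA; apply: alg_le.
Qed.

Lemma J_ideal : arch_ideal le join Jcut.
Proof.
split; first split.
- by apply: J_of_I; exact: I0 hI.
- exact: J_sub.
- by move=> z b; exact: J_mul.
- by move=> b' b hb; apply: (J_solidk (k := 1)) => //; rewrite scale1r.
- exact: J_arch.
Qed.

(* 1 \notin J: otherwise (a - (s_I + d))^- \in I for some d > 0. *)
Lemma J_not1 : ~ Jcut 1.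
Proof.
move=> J1.
have h2 : (0:R) < 2^-1 by rewrite invr_gt0.
have [d [hd Id]] := J1 _ h2.
have e1 : (1:T) - (2^-1)%:A = (2^-1)%:A.
  by rewrite -{1}[1]scale1r -scalerBl; congr (_ *: _); lra.
rewrite (abs_id ge0_1) e1 (pos_id (alg_ge0 (ltW h2))) in Id.
have [M [hM1 hM]] := bounded (gap d).
have k0 : 0 < M + M by lra.
have Iy : I (gap d).
  apply: (I_le hI (neg_ge0 _) _ (I_scale hI (M + M) Id)).
  apply: ble_trans (meet_scale2 _ _ k0).
  apply: meet_glb; last by apply: le_scale_ge1 (neg_ge0 _); lra.
  by rewrite scalerA; apply: ble_trans hM _; apply: alg_le; lra.
have := cut_le_sup Iy; lra.
Qed.

(* (a - c)^+ \in J for c >= s_I, since (a - c)^+ /\ (a - (s_I + e))^- = 0. *)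
Lemma J_pos c : cut_sup <= c -> Jcut (pos (a - c%:A)).
Proof.
move=> hc e he; exists e; split => //.
set t := a - (cut_sup + e)%:A.
apply: (I_le hI (meet_ge0 (pos_ge0 _) (neg_ge0 _)) _ (I0 hI)).
rewrite -(meet_pos_neg t); apply: meet_mono (ble_refl _).
rewrite (abs_id (pos_ge0 _)); apply: pos_lub (pos_ge0 t).
rewrite pos_subC; apply: join_lub.
  apply: ble_trans (le_pos t).
  by rewrite /t scalerDl opprD addrA; apply: le_add2r; exact: alg_sub_le.
by apply: ble_trans (le_opp (alg_ge0 (ltW he))) _; rewrite oppr0; exact: pos_ge0.
Qed.

(* Part (3), second half: I \/ [[(a - c)^+]] <> A for every c >= s_I,
   because both ideals lie in J and 1 \notin J. *)
Lemma join_ne_top c : cut_sup <= c ->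
  arch_join le join I (arch_gen le join (fun b => b = pos (a - c%:A))) <> arch_top (A := T).
Proof.
move=> hc htop; apply: J_not1.
have : arch_join le join I (arch_gen le join (fun b => b = pos (a - c%:A))) 1.
  by rewrite htop.
apply: (arch_gen_sub J_ideal) => b [Ib|Kb]; first exact: J_of_I.
by apply: (arch_gen_sub J_ideal _ Kb) => b' ->; exact: J_pos.
Qed.
End Cut.

End BalAlgebra.

Section Generators.
Variables (R : realType) (disp : Order.disp_t) (B : ctbDistrLatticeType disp).
Variables (D : comAlgType R) (leD : D -> D -> Prop) (joinD : D -> D -> D) (x : B -> D).
Hypothesis HD : dedekind_completion_RB leD joinD x.
Let HDb := dc_bal HD.

Lemma x_idem f : x f * x f = x f.
Proof. by rewrite -(dc_meet HD) meetxx. Qed.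
Lemma x_ge0 f : leD 0 (x f).
Proof. by rewrite -x_idem; exact: sqr_ge0 HDb (x f). Qed.
Lemma x_compl_ge0 f : leD 0 (1 - x f).
Proof. by rewrite -(dc_compl HD); exact: x_ge0. Qed.
Lemma x_top : x \top%O = 1.
Proof. by rewrite -compl0 (dc_compl HD) (dc_bot HD) subr0. Qed.
Lemma x_le f g : (f <= g)%O -> leD (x f) (x g).
Proof.
move=> hfg; apply/(le_subP HDb).
have -> : x g - x f = x (g `&` ~` f)%O.
  rewrite (dc_meet HD) (dc_compl HD) mulrBr mulr1 -(dc_meet HD).
  by move/meet_idPl: hfg; rewrite meetC => ->.
exact: x_ge0.
Qed.

(* q x_f <= max(q, 0), since 0 <= x_f <= 1. *)
Lemma x_scale_le_max (q : R) f : leD (q *: x f) (Num.max 0 q)%:A.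
Proof.
case: (lerP q 0) => hq.
  rewrite scale0r; apply/(le_subP HDb).
  by rewrite sub0r -scaleNr; apply: (scale_ge0 HDb); [rewrite oppr_ge0 | exact: x_ge0].
by rewrite -x_top; apply: (le_scale HDb); [exact: ltW | exact: x_le (lex1 f)].
Qed.
End Generators.

Section Alpha.
Variables (R : realType) (A : comAlgType R) (leA : A -> A -> Prop) (joinA : A -> A -> A).
Hypothesis HA : is_bal leA joinA.
Variables (disp : Order.disp_t) (B : ctbDistrLatticeType disp) (e : (A -> Prop) -> B).
Hypothesis HB : free_bool_ext leA joinA e.
Variables (D : comAlgType R) (leD : D -> D -> Prop) (joinD : D -> D -> D) (x : B -> D).
Hypothesis HD : dedekind_completion_RB leD joinD x.
Let HDb := dc_bal HD.

Local Notation xc L := (x (Order.compl (e L))).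

(* e is injective on Arch(A) and preserves joins: if x_{~I} x_{~K} = 0, i.e.
   ~e I /\ ~e K = bottom in B, then I \/ K = A. *)
Lemma join_full_of_disjoint I K : arch_ideal leA joinA I -> arch_ideal leA joinA K ->
  xc I * xc K = 0 -> arch_join leA joinA I K = arch_top (A := A).
Proof.
move=> hI hK hIK.
have hbot : (Order.compl (e I) `&` Order.compl (e K))%O = Order.bottom.
  by apply: (dc_inj HD); rewrite (dc_meet HD).
apply: (fbe_inj HB (arch_gen_ideal _ _ _) (arch_top_ideal _ _)).
by rewrite (fbe_join HB hI hK) (fbe_top HB) -[LHS]complK complU hbot compl0.
Qed.

(* If L \/ K = A then e L \/ e K = top in B, hence ~e L <= e K. *)
Lemma compl_le_of_join_full L K : arch_ideal leA joinA L -> arch_ideal leA joinA K ->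
  arch_join leA joinA L K = arch_top (A := A) -> (Order.compl (e L) <= e K)%O.
Proof.
move=> hL hK htop.
have hj : (e L `|` e K)%O = Order.top by rewrite -(fbe_join HB hL hK) htop (fbe_top HB).
by rewrite -[Order.compl (e L)]meetx1 -hj meetUr meetCx join0x leIr.
Qed.

Variable a : A.
Hypothesis ha : leA 0 a.
Local Notation s := (alpha_shift leA a).
Local Notation S := (alpha_set leA joinA e x s a).
Local Notation gen_pos c := (arch_gen leA joinA (fun b => b = pos joinA (a - c%:A))).

Lemma alpha_shift_spec : leA 0 (a + s%:A).
Proof.
apply: (epsilon_spec (inhabits (0 : R)) (fun s : R => leA 0 (a + s%:A))).
by exists 0; rewrite scale0r addr0.
Qed.

(* s = s x_{~[[0]]} belongs to S. *)
Lemma alpha_set_shift : S s%:A.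
Proof.
exists s, (arch_bot leA joinA); split; first exact: arch_gen_ideal.
split; last by rewrite (fbe_bot HB) compl0 (x_top HD).
by rewrite addrK (neg_id0 HA ha); exact: I0 (arch_gen_ideal _ _ _).
Qed.

Variable N : R.
Hypothesis hN : leA a N%:A.

(* An element q x_{~L} of S with q > N + s vanishes, for then L contains the
   positive constant q - N - s <= (a + s - q)^-. *)
Lemma alpha_set_vanish q L : arch_ideal leA joinA L ->
  L (neg joinA (a + s%:A - q%:A)) -> N + s < q -> xc L = 0.
Proof.
move=> hL hLq hq.
suff -> : e L = Order.top by rewrite compl1 (dc_bot HD).
have -> : L = arch_top (A := A); last exact: (fbe_top HB).
apply: funext => b; apply: propext.
split=> // _; apply: (ideal_full_of_const HA hL (k := q - N - s) _ _ hLq).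
  by rewrite subr_gt0 ltrBrDr addrC.
apply: (ble_trans HA _ (le_neg HA _)); rewrite opprB.
have -> : (q - N - s)%:A = q%:A - (N%:A + s%:A) :> A.
  by rewrite -scalerDl -scalerBl; congr (_ *: _); lra.
exact (le_add HA (ble_refl HA _) (le_opp HA (le_add2r HA _ hN))).
Qed.

Lemma alpha_set_ub y : S y -> leD y (Num.max 0 (N + s))%:A.
Proof.
move=> [q [L [hL [hLq ->]]]].
case: (ltrP (N + s) q) => hq.
  rewrite (alpha_set_vanish hL hLq hq) scaler0.
  by apply: (alg_ge0 HDb); rewrite le_max lexx.
apply: (ble_trans HDb (x_scale_le_max HD q _)); apply: (alg_le HDb).
by rewrite ge_max !le_max lexx hq orbT.
Qed.

Lemma alpha_sup_lub : is_lub leD S (supD leD S).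
Proof.
apply: (epsilon_spec (inhabits (0 : D)) (fun d => is_lub leD S d)).
apply: (dc_complete HD); first by exists s%:A; exact: alpha_set_shift.
by exists (Num.max 0 (N + s))%:A; exact: alpha_set_ub.
Qed.

(* For c + s >= 0 and K = [[(a - c)^+]], S is bounded by
   (c + s) x_{~K} + M x_K with M = max(c + s, N + s): an element q x_{~L} of S
   is below c + s if q <= c + s; otherwise L \/ K = A, so x_{~L} <= x_K. *)
Lemma alpha_set_ub_cut c y : 0 <= c + s -> S y ->
  leD y ((c + s) *: xc (gen_pos c) + Num.max (c + s) (N + s) *: (1 - xc (gen_pos c))).
Proof.
move=> hcs [q [L [hL [hLq ->]]]].
set K := gen_pos c; set M := Num.max (c + s) (N + s).
have hK : arch_ideal leA joinA K by exact: arch_gen_ideal.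
have hM1 : c + s <= M by rewrite le_max lexx.
have hM2 : N + s <= M by rewrite le_max lexx orbT.
have eK : 1 - xc K = x (e K) by rewrite (dc_compl HD) opprB addrC subrK.
have u1 : leD 0 ((c + s) *: xc K) by exact: (scale_ge0 HDb hcs (x_ge0 HD _)).
have u2 : leD 0 (M *: (1 - xc K)).
  by apply: (scale_ge0 HDb _ (x_compl_ge0 HD _)); lra.
case: (lerP q (c + s)) => hqc.
  apply: (ble_trans HDb (x_scale_le_max HD q _)).
  have hqc' : Num.max 0 q <= c + s by rewrite ge_max hcs hqc.
  apply: (ble_trans HDb (alg_le HDb hqc')).
  have -> : (c + s)%:A = (c + s) *: xc K + (c + s) *: (1 - xc K) :> D.
    by rewrite -scalerDr [xc K + _]addrC subrK.
  exact: (le_add HDb (ble_refl HDb _) (scale_le_l HDb hM1 (x_compl_ge0 HD _))).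
case: (ltrP (N + s) q) => hqN.
  by rewrite (alpha_set_vanish hL hLq hqN) scaler0; exact: (add_ge0 HDb u1 u2).
have htop : arch_join leA joinA L K = arch_top (A := A).
  apply: (arch_join_full HA (k := q - s - c) _ _ hLq (arch_gen_in (erefl _))).
    by lra.
  apply: (ble_trans HA _ (le_add HA (le_neg HA _) (le_pos HA _))).
  have -> : - (a + s%:A - q%:A) + (a - c%:A) = (q - s - c)%:A :> A.
    by rewrite !scalerBl; move: (q%:A) (s%:A) (c%:A) => q1 s1 c1; ring.
  exact: (ble_refl HA).
have hq0 : 0 <= q by lra.
apply: (ble_trans HDb (le_scale HDb hq0 (x_le HD (compl_le_of_join_full hL hK htop)))).
apply: (ble_trans HDb (scale_le_l HDb (le_trans hqN hM2) (x_ge0 HD _))).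
by rewrite -eK; have := le_add HDb u1 (ble_refl HDb (M *: (1 - xc K))); rewrite add0r.
Qed.

Section Ideal.
Variable I : A -> Prop.
Hypothesis hI : arch_ideal leA joinA I.
Hypothesis hIA : I <> arch_top (A := A).

(* Part (2), "<-": (r + s) x_{~I} and s lie in S; mixing them along the
   complementary idempotents x_{~I}, 1 - x_{~I} gives r x_{~I} + s <= sup S. *)
Lemma alpha_ge r : I (neg joinA (a - r%:A)) -> leD (r *: xc I) (alpha leA joinA e leD x a).
Proof.
move=> hr; have [hub _] := alpha_sup_lub.
have m1 : S ((r + s) *: xc I).
  by exists (r + s), I; do 2 split => //; rewrite scalerDl opprD addrA addrAC addrK.
rewrite /alpha addrC; apply: (le_addK HDb).
have -> : r *: xc I + s%:A = (r + s) *: xc I * xc I + s%:A * (1 - xc I).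
  rewrite -scalerAl (x_idem HD) mulr_algl scalerBr scalerDl.
  by move: (r *: xc I) (s *: xc I) (s *: (1 : D)) => u v w; ring.
exact: (le_mix HDb (x_ge0 HD _) (x_compl_ge0 HD _) (hub _ m1) (hub _ alpha_set_shift)).
Qed.

(* Part (2), "->": if r > s_I, take s_I < c < r and K = [[(a - c)^+]].  Then
   r x_{~I} + s <= sup S <= (c + s) x_{~K} + M x_K, so x_{~I} x_{~K} = 0, i.e.
   I \/ K = A, which contradicts join_ne_top. *)
Lemma alpha_le r : leD (r *: xc I) (alpha leA joinA e leD x a) -> I (neg joinA (a - r%:A)).
Proof.
move=> hr; set sI := cut_sup joinA a I.
case: (lerP r sI) => [|hrI]; first exact: (cut_iff HA ha hI hIA r).2.
set c := (sI + r) / 2.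
have hcs : 0 <= c + s.
  by have := cut_shift HA ha hI hIA alpha_shift_spec; rewrite -/sI /c; lra.
have hle : leD (r *: xc I + s%:A)
    ((c + s) *: xc (gen_pos c) + Num.max (c + s) (N + s) *: (1 - xc (gen_pos c))).
  apply: (ble_trans HDb _ (alpha_sup_lub.2 _ (fun y => alpha_set_ub_cut hcs))).
  by have := le_add2r HDb (s%:A) hr; rewrite /alpha [- _ + _]addrC subrK.
have hcr : c < r by rewrite /c; lra.
have hdisj := idem_disjoint HDb (x_idem HD _) (x_idem HD _) (x_ge0 HD _) (x_ge0 HD _) hcr hle.
have hc : sI <= c by rewrite /c; lra.
case: (join_ne_top HA ha hI hIA hc).
exact: (join_full_of_disjoint hI (arch_gen_ideal _ _ _) hdisj).
Qed.
End Ideal.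
End Alpha.

Unset Implicit Arguments.
Set Strict Implicit.

Theorem lemmaA6 (R : realType)
  (A : comAlgType R) (leA : A -> A -> Prop) (joinA : A -> A -> A)
  (HA : is_bal leA joinA)
  (disp : Order.disp_t) (B : ctbDistrLatticeType disp) (e : (A -> Prop) -> B)
  (HB : free_bool_ext leA joinA e)
  (D : comAlgType R) (leD : D -> D -> Prop) (joinD : D -> D -> D) (x : B -> D)
  (HD : dedekind_completion_RB leD joinD x)
  (a : A) (I : A -> Prop)
  (ha : leA 0 a) (hI : arch_ideal leA joinA I) (hIA : I <> arch_top (A:=A)) :
  let sI := sup [set r : R | I (neg joinA (a - r%:A))] in
  I (neg joinA (a - sI%:A)) /\
  (forall r : R,
     leD (r *: x (Order.compl (e I))) (alpha leA joinA e leD x a)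
     <-> I (neg joinA (a - r%:A))) /\
  sI = sup [set r : R | leD (r *: x (Order.compl (e I))) (alpha leA joinA e leD x a)] /\
  arch_join leA joinA I (arch_gen leA joinA (fun b => b = pos joinA (a - sI%:A)))
    <> arch_top (A:=A).
Proof.
move=> sI; have [N [_ hN]] := bounded HA a.
have part2 r : leD (r *: x (Order.compl (e I))) (alpha leA joinA e leD x a)
    <-> I (neg joinA (a - r%:A)).
  split; [exact: (alpha_le HA HB HD ha hN hI hIA) | exact: (alpha_ge HA HB HD ha hN hI)].
split; first exact: (cut_sup_in HA ha hI hIA).
split; first exact: part2.
split; last exact: (join_ne_top HA ha hI hIA (lexx sI)).
congr sup; apply: funext => r.
exact: propext (iff_sym (part2 r)).
Qed.
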